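(* For integers $d \ge 0$ define \[ \textsc{OCB}^*(d) := 0.8948 \int_0^{1/2} \frac{r(1-2r)}{(1-r)^2}\, r^d \, dr, \qquad \textsc{MLB}^*(d) := 0.9 \int_0^{1/2} \frac{(1-2r)^2}{(1-r)^3}\, r^d \, dr . \] Let $\textnormal{\textsc{Thr}}$ be a positive constant with $\textnormal{\textsc{Thr}} \le 1/4678$. Then: (1) for every integer $d \ge 5$, $\textsc{OCB}^*(d) \ge \textsc{MLB}^*(d)$; (2) for every integer $0 \le d \le 4$, $\textsc{OCB}^*(d) \ge \frac{1}{1131} \ge \textnormal{\textsc{Thr}}$ and $\textsc{MLB}^*(d) \ge \frac{1}{1131} \ge \textnormal{\textsc{Thr}}$.
   Context: $\textnormal{\textsc{Thr}}$ is the label-density threshold fixed in the paper; the only property of it used in this statement is $\textnormal{\textsc{Thr}} \le 1/4678$. *)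

From Stdlib Require Import Reals.
From Coquelicot Require Import Coquelicot.
Open Scope R_scope.

Definition OCBstar (d : nat) : R :=
  (8948 / 10000) * RInt (fun r => r * (1 - 2 * r) / (1 - r) ^ 2 * r ^ d) 0 (1 / 2).

Definition MLBstar (d : nat) : R :=
  (9 / 10) * RInt (fun r => (1 - 2 * r) ^ 2 / (1 - r) ^ 3 * r ^ d) 0 (1 / 2).

(* For d = 5 + k the integrand of OCB*(d) - MLB*(d) is
     r^d (1 - 2r) / (1 - r)^3 * g(r),   g(r) = 0.8948 r (1 - r) - 0.9 (1 - 2r),
   and g has a single root c in [0, 1/2], negative before it and positive after.
   Splitting off the polynomial h(r) = (1 - 2r) r^5 (1 + 3r + 6r^2) g(r), the rest
   phi(r) = r^k / ((1 - r)^3 (1 + 3r + 6r^2)) is nondecreasing, so h and phi - phi(c)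
   have the same sign and h phi >= phi(c) h; the exact value of the integral of h is
   positive.  For d <= 4, bounding r^d below by r^4 and (1 - r)^-2, (1 - r)^-3 below by
   partial sums of their power series gives polynomials whose exact integrals exceed
   1/1131. *)

From Stdlib Require Import Reals Lra Psatz.
From Coquelicot Require Import Coquelicot.
Open Scope R_scope.

Definition psum_inv_sq (n : nat) (x : R) : R := sum_f_R0 (fun i => INR (S i) * x ^ i) n.

Lemma psum_inv_sq_mul (n : nat) (x : R) :
  (1 - x) ^ 2 * psum_inv_sq n x = 1 - INR (n + 2) * x ^ S n + INR (n + 1) * x ^ S (S n).
Proof.
  unfold psum_inv_sq. induction n as [|n IH].
  - simpl. ring.
  - rewrite tech5, Rmult_plus_distr_l, IH, !plus_INR, !S_INR. simpl pow; simpl INR. ring.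
Qed.

Definition psum_inv_cube (n : nat) (x : R) : R :=
  sum_f_R0 (fun i => INR (S i * S (S i)) / 2 * x ^ i) n.

Lemma psum_inv_cube_mul (n : nat) (x : R) :
  (1 - x) * psum_inv_cube n x = psum_inv_sq n x - INR (S n * S (S n)) / 2 * x ^ S n.
Proof.
  unfold psum_inv_cube, psum_inv_sq. induction n as [|n IH].
  - simpl. field.
  - rewrite !tech5, Rmult_plus_distr_l, IH, !mult_INR, !S_INR. simpl pow; simpl INR. field.
Qed.

Lemma psum_inv_sq_le (n : nat) (x : R) : 0 <= x < 1 -> psum_inv_sq n x <= / (1 - x) ^ 2.
Proof.
  intros Hx.
  assert (Hpos : 0 < (1 - x) ^ 2) by (apply pow_lt; lra).
  apply (Rmult_le_reg_l ((1 - x) ^ 2)); [exact Hpos |].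
  rewrite Rinv_r by lra. rewrite psum_inv_sq_mul, !plus_INR. simpl (INR 1); simpl (INR 2).
  replace (x ^ S (S n)) with (x * x ^ S n) by reflexivity.
  assert (0 <= x ^ S n * (INR n + 2 - (INR n + 1) * x)).
  { pose proof (pos_INR n). apply Rmult_le_pos; [apply pow_le | ]; nra. }
  lra.
Qed.

Lemma psum_inv_cube_le (n : nat) (x : R) : 0 <= x < 1 -> psum_inv_cube n x <= / (1 - x) ^ 3.
Proof.
  intros Hx.
  assert (Hpos : 0 < 1 - x) by lra.
  apply (Rmult_le_reg_l (1 - x)); [exact Hpos |].
  replace ((1 - x) * / (1 - x) ^ 3) with (/ (1 - x) ^ 2) by (field; lra).
  rewrite psum_inv_cube_mul.
  assert (0 <= INR (S n * S (S n)) / 2 * x ^ S n).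
  { apply Rmult_le_pos; [pose proof (pos_INR (S n * S (S n))); lra | apply pow_le; lra]. }
  pose proof (psum_inv_sq_le n x Hx). lra.
Qed.

Lemma pow_le_pow_of_le_1 (x : R) (m n : nat) : 0 <= x <= 1 -> (m <= n)%nat -> x ^ n <= x ^ m.
Proof.
  intros Hx Hmn. replace n with (m + (n - m))%nat by lia. rewrite pow_add.
  assert (x ^ (n - m) <= 1) by (rewrite <- (pow1 (n - m)); apply pow_incr; lra).
  assert (0 <= x ^ m) by (apply pow_le; lra).
  nra.
Qed.

Lemma ex_RInt_of_ex_derive (f : R -> R) (a b : R) :
  a <= b -> (forall x, a <= x <= b -> ex_derive f x) -> ex_RInt f a b.
Proof.
  intros Hab Hf. apply (@ex_RInt_continuous R_CompleteNormedModule). intros x Hx.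
  rewrite Rmin_left, Rmax_right in Hx by lra.
  apply (ex_derive_continuous f), Hf, Hx.
Qed.

Lemma RInt_of_is_derive (F f : R -> R) (a b : R) :
  (forall x : R, is_derive F x (f x)) -> (forall x : R, ex_derive f x) ->
  RInt f a b = F b - F a :> R.
Proof.
  intros HF Hf. apply is_RInt_unique, (is_RInt_derive F f); intros x _.
  - apply HF.
  - apply (ex_derive_continuous f), Hf.
Qed.

Lemma RInt_ge_at_sign_change (f h phi : R -> R) (a b c : R) :
  a <= b -> ex_RInt f a b -> ex_RInt h a b ->
  (forall x, a < x < b -> f x = h x * phi x) ->
  (forall x, a < x < b -> x <= c -> h x <= 0 /\ phi x <= phi c) ->
  (forall x, a < x < b -> c <= x -> 0 <= h x /\ phi c <= phi x) ->
  phi c * RInt h a b <= RInt f a b.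
Proof.
  intros Hab Hf Hh Hfh Hleft Hright.
  replace (phi c * RInt h a b) with (RInt (fun x => phi c * h x) a b)
    by exact (RInt_scal h a b (phi c) Hh).
  apply RInt_le; [exact Hab | exact (ex_RInt_scal h a b (phi c) Hh) | exact Hf |].
  intros x Hx. rewrite Hfh by exact Hx.
  destruct (Rle_dec x c) as [Hxc | Hxc].
  - destruct (Hleft x Hx Hxc). nra.
  - destruct (Hright x Hx ltac:(lra)). nra.
Qed.

Definition ocb_integrand (d : nat) (r : R) : R := r * (1 - 2 * r) / (1 - r) ^ 2 * r ^ d.
Definition mlb_integrand (d : nat) (r : R) : R := (1 - 2 * r) ^ 2 / (1 - r) ^ 3 * r ^ d.

Lemma OCBstar_RInt (d : nat) : OCBstar d = 8948 / 10000 * RInt (ocb_integrand d) 0 (1 / 2).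
Proof. reflexivity. Qed.

Lemma MLBstar_RInt (d : nat) : MLBstar d = 9 / 10 * RInt (mlb_integrand d) 0 (1 / 2).
Proof. reflexivity. Qed.

Lemma ex_RInt_ocb_integrand (d : nat) : ex_RInt (ocb_integrand d) 0 (1 / 2).
Proof.
  apply ex_RInt_of_ex_derive; [lra |]. intros x Hx. unfold ocb_integrand.
  auto_derive. nra.
Qed.

Lemma ex_RInt_mlb_integrand (d : nat) : ex_RInt (mlb_integrand d) 0 (1 / 2).
Proof.
  apply ex_RInt_of_ex_derive; [lra |]. intros x Hx. unfold mlb_integrand.
  auto_derive. nra.
Qed.

(* 1 + 3r + 6r^2 is the quadratic Taylor polynomial of (1 - r)^-3.  With the bare
   weight (1 - r)^3 the integral of the corresponding polynomial is negative. *)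
Definition weight (r : R) : R := (1 - r) ^ 3 * (1 + 3 * r + 6 * r ^ 2).

Lemma weight_decreasing (a b : R) : a <= b -> weight b <= weight a.
Proof.
  intros Hab.
  (* weight' = -30 (r (1 - r))^2, and a mean square is mean^2 + variance *)
  assert (E : weight a - weight b = (b - a) * (30 * ((a + b) / 2 - (a * a + a * b + b * b) / 3) ^ 2
      + 10 * ((1 - (a + b)) * ((b - a) / 2)) ^ 2 + 8 / 3 * (((b - a) / 2) ^ 2) ^ 2))
    by (unfold weight; field).
  enough (0 <= weight a - weight b) by lra.
  rewrite E. apply Rmult_le_pos; [lra |].
  pose proof (pow2_ge_0 ((a + b) / 2 - (a * a + a * b + b * b) / 3)).
  pose proof (pow2_ge_0 ((1 - (a + b)) * ((b - a) / 2))).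
  pose proof (pow2_ge_0 (((b - a) / 2) ^ 2)).
  lra.
Qed.

Lemma weight_pos (r : R) : r < 1 -> 0 < weight r.
Proof.
  intros Hr. unfold weight. apply Rmult_lt_0_compat; [apply pow_lt; lra | nra].
Qed.

Lemma pow_div_weight_le (k : nat) (a b : R) :
  0 <= a <= b -> b < 1 -> a ^ k / weight a <= b ^ k / weight b.
Proof.
  intros Hab Hb.
  pose proof (weight_pos a ltac:(lra)). pose proof (weight_pos b Hb).
  pose proof (weight_decreasing a b ltac:(lra)).
  unfold Rdiv. apply Rmult_le_compat.
  - apply pow_le. lra.
  - left. apply Rinv_0_lt_compat. assumption.
  - apply pow_incr. lra.
  - apply Rinv_le_contravar; assumption.
Qed.

Definition gap (r : R) : R := 8948 / 10000 * r * (1 - r) - 9 / 10 * (1 - 2 * r).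

(* roots of 8948 r^2 - 26948 r + 9000 = -10000 gap r *)
Definition gap_root : R := (26948 - sqrt 404066704) / 17896.
Definition gap_root' : R := (26948 + sqrt 404066704) / 17896.

Lemma gap_factor (r : R) : gap r = 8948 / 10000 * (r - gap_root) * (gap_root' - r).
Proof.
  assert (Hsq : sqrt 404066704 * sqrt 404066704 = 404066704) by (apply sqrt_sqrt; lra).
  unfold gap, gap_root, gap_root'. lra.
Qed.

Lemma gap_root_bounds : 0 <= gap_root <= 1 / 2 /\ 1 <= gap_root'.
Proof.
  assert (Hsq : sqrt 404066704 * sqrt 404066704 = 404066704) by (apply sqrt_sqrt; lra).
  pose proof (sqrt_pos 404066704).
  assert (18000 <= sqrt 404066704 <= 26948) by nra.
  unfold gap_root, gap_root'. lra.
Qed.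

Lemma gap_nonpos (r : R) : r <= gap_root -> gap r <= 0.
Proof.
  intros Hr. destruct gap_root_bounds as [Hc Hc']. rewrite gap_factor.
  assert (0 <= (gap_root - r) * (gap_root' - r)) by (apply Rmult_le_pos; lra).
  lra.
Qed.

Lemma gap_nonneg (r : R) : gap_root <= r <= 1 -> 0 <= gap r.
Proof.
  intros Hr. destruct gap_root_bounds as [Hc Hc']. rewrite gap_factor.
  assert (0 <= (r - gap_root) * (gap_root' - r)) by (apply Rmult_le_pos; lra).
  lra.
Qed.

Definition weighted_gap (r : R) : R := (1 - 2 * r) * r ^ 5 * (1 + 3 * r + 6 * r ^ 2) * gap r.

Lemma weighted_gap_cofactor_nonneg (r : R) :
  0 <= r <= 1 / 2 -> 0 <= (1 - 2 * r) * r ^ 5 * (1 + 3 * r + 6 * r ^ 2).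
Proof.
  intros Hr. apply Rmult_le_pos; [apply Rmult_le_pos; [lra | apply pow_le; lra] | nra].
Qed.

Lemma weighted_gap_nonpos (r : R) : 0 <= r <= gap_root -> weighted_gap r <= 0.
Proof.
  intros Hr. destruct gap_root_bounds as [Hc _].
  pose proof (weighted_gap_cofactor_nonneg r ltac:(lra)). pose proof (gap_nonpos r ltac:(lra)).
  unfold weighted_gap. nra.
Qed.

Lemma weighted_gap_nonneg (r : R) : gap_root <= r <= 1 / 2 -> 0 <= weighted_gap r.
Proof.
  intros Hr. destruct gap_root_bounds as [Hc _].
  pose proof (weighted_gap_cofactor_nonneg r ltac:(lra)). pose proof (gap_nonneg r ltac:(lra)).
  unfold weighted_gap. apply Rmult_le_pos; assumption.
Qed.

Lemma ex_derive_weighted_gap (x : R) : ex_derive weighted_gap x.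
Proof. unfold weighted_gap, gap. auto_derive. trivial. Qed.

Lemma RInt_weighted_gap : RInt weighted_gap 0 (1 / 2) = 2063 / 316800000 :> R.
Proof.
  rewrite (RInt_of_is_derive (fun x => x ^ 6 * (-3/20 + x * (641/2500 + x * (9/40
      + x * (24763/22500 + x * (-20211/6250 + x * (6711/6875))))))) weighted_gap).
  - field.
  - intros x. auto_derive; [trivial |]. unfold weighted_gap, gap. field.
  - exact ex_derive_weighted_gap.
Qed.

Definition ocb_mlb_diff (d : nat) (r : R) : R :=
  8948 / 10000 * ocb_integrand d r - 9 / 10 * mlb_integrand d r.

Lemma OCBstar_sub_MLBstar (d : nat) : OCBstar d - MLBstar d = RInt (ocb_mlb_diff d) 0 (1 / 2).
Proof.
  rewrite OCBstar_RInt, MLBstar_RInt. symmetry. apply is_RInt_unique.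
  exact (is_RInt_minus _ _ _ _ _ _
    (is_RInt_scal _ _ _ (8948 / 10000) _ (RInt_correct _ _ _ (ex_RInt_ocb_integrand d)))
    (is_RInt_scal _ _ _ (9 / 10) _ (RInt_correct _ _ _ (ex_RInt_mlb_integrand d)))).
Qed.

Lemma ocb_mlb_diff_factor (k : nat) (r : R) :
  r <> 1 -> ocb_mlb_diff (5 + k) r = weighted_gap r * (r ^ k / weight r).
Proof.
  intros Hr. unfold ocb_mlb_diff, ocb_integrand, mlb_integrand, weighted_gap, gap, weight.
  rewrite pow_add. assert (1 + 3 * r + 6 * r ^ 2 <> 0) by nra.
  field. split; [assumption | lra].
Qed.

Lemma OCBstar_ge_MLBstar (d : nat) : (5 <= d)%nat -> OCBstar d >= MLBstar d.
Proof.
  intros Hd. replace d with (5 + (d - 5))%nat by lia. set (k := (d - 5)%nat).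
  destruct gap_root_bounds as [Hc Hc'].
  enough (Hdiff : 0 <= RInt (ocb_mlb_diff (5 + k)) 0 (1 / 2))
    by (rewrite <- OCBstar_sub_MLBstar in Hdiff; lra).
  apply Rle_trans with (gap_root ^ k / weight gap_root * RInt weighted_gap 0 (1 / 2)).
  - rewrite RInt_weighted_gap. apply Rmult_le_pos; [| lra].
    apply Rmult_le_pos; [apply pow_le; lra | left; apply Rinv_0_lt_compat, weight_pos; lra].
  - apply (RInt_ge_at_sign_change _ weighted_gap (fun r => r ^ k / weight r)).
    + lra.
    + apply ex_RInt_of_ex_derive; [lra |]. intros x Hx.
      unfold ocb_mlb_diff, ocb_integrand, mlb_integrand. auto_derive. nra.
    + apply ex_RInt_of_ex_derive; [lra |]. intros x _. apply ex_derive_weighted_gap.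
    + intros x Hx. apply ocb_mlb_diff_factor. lra.
    + intros x Hx Hxc. split; [apply weighted_gap_nonpos; lra | apply pow_div_weight_le; lra].
    + intros x Hx Hxc. split; [apply weighted_gap_nonneg; lra | apply pow_div_weight_le; lra].
Qed.

(* 11 and 7 are the shortest truncations for which the integrals below exceed 1/1131 *)
Definition ocb_lower (r : R) : R := r ^ 5 * (1 - 2 * r) * psum_inv_sq 11 r.
Definition mlb_lower (r : R) : R := r ^ 4 * (1 - 2 * r) ^ 2 * psum_inv_cube 7 r.

Lemma ocb_lower_le (d : nat) (r : R) :
  (d <= 4)%nat -> 0 <= r <= 1 / 2 -> ocb_lower r <= ocb_integrand d r.
Proof.
  intros Hd Hr. unfold ocb_lower, ocb_integrand, Rdiv.
  pose proof (pow_le_pow_of_le_1 r d 4 ltac:(lra) Hd).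
  pose proof (psum_inv_sq_le 11 r ltac:(lra)).
  replace (r ^ 5 * (1 - 2 * r) * psum_inv_sq 11 r)
    with (r * (1 - 2 * r) * psum_inv_sq 11 r * r ^ 4) by ring.
  assert (0 <= psum_inv_sq 11 r) by (unfold psum_inv_sq; simpl; nra).
  assert (0 <= r ^ 4) by (apply pow_le; lra).
  apply Rmult_le_compat; [| assumption | | assumption].
  - apply Rmult_le_pos; nra.
  - apply Rmult_le_compat_l; nra.
Qed.

Lemma mlb_lower_le (d : nat) (r : R) :
  (d <= 4)%nat -> 0 <= r <= 1 / 2 -> mlb_lower r <= mlb_integrand d r.
Proof.
  intros Hd Hr. unfold mlb_lower, mlb_integrand, Rdiv.
  pose proof (pow_le_pow_of_le_1 r d 4 ltac:(lra) Hd).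
  pose proof (psum_inv_cube_le 7 r ltac:(lra)).
  replace (r ^ 4 * (1 - 2 * r) ^ 2 * psum_inv_cube 7 r)
    with ((1 - 2 * r) ^ 2 * psum_inv_cube 7 r * r ^ 4) by ring.
  assert (0 <= psum_inv_cube 7 r) by (unfold psum_inv_cube; simpl; nra).
  assert (0 <= r ^ 4) by (apply pow_le; lra).
  apply Rmult_le_compat; [| assumption | | assumption].
  - apply Rmult_le_pos; nra.
  - apply Rmult_le_compat_l; nra.
Qed.

Lemma ex_derive_ocb_lower (x : R) : ex_derive ocb_lower x.
Proof. unfold ocb_lower, psum_inv_sq. simpl. auto_derive. trivial. Qed.

Lemma ex_derive_mlb_lower (x : R) : ex_derive mlb_lower x.
Proof. unfold mlb_lower, psum_inv_cube. simpl. auto_derive. trivial. Qed.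

Lemma RInt_ocb_lower : RInt ocb_lower 0 (1 / 2) = 113368693 / 114708971520 :> R.
Proof.
  rewrite (RInt_of_is_derive (fun x => x ^ 6 * (1/6 + x * (x * (-1/8 + x * (-2/9 + x * (-3/10
      + x * (-4/11 + x * (-5/12 + x * (-6/13 + x * (-1/2 + x * (-8/15 + x * (-9/16
      + x * (-10/17 + x * (-4/3)))))))))))))) ocb_lower).
  - field.
  - intros x. auto_derive; [trivial |]. unfold ocb_lower, psum_inv_sq. simpl. field.
  - exact ex_derive_ocb_lower.
Qed.

Lemma RInt_mlb_lower : RInt mlb_lower 0 (1 / 2) = 18181 / 18450432 :> R.
Proof.
  rewrite (RInt_of_is_derive (fun x => x ^ 5 * (1/5 + x * (-1/6 + x * (-2/7 + x * (-1/4
      + x * (-1/9 + x * (1/10 + x * (4/11 + x * (2/3 + x * (-32/13 + x * (72/7))))))))))) mlb_lower).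
  - field.
  - intros x. auto_derive; [trivial |]. unfold mlb_lower, psum_inv_cube. simpl. field.
  - exact ex_derive_mlb_lower.
Qed.

Lemma OCBstar_ge_of_le_4 (d : nat) : (d <= 4)%nat -> OCBstar d >= 1 / 1131.
Proof.
  intros Hd. rewrite OCBstar_RInt.
  assert (Hlow : RInt ocb_lower 0 (1 / 2) <= RInt (ocb_integrand d) 0 (1 / 2)).
  { apply RInt_le; [lra | | apply ex_RInt_ocb_integrand |].
    - apply ex_RInt_of_ex_derive; [lra |]. intros x _. apply ex_derive_ocb_lower.
    - intros x Hx. apply ocb_lower_le; [exact Hd | lra]. }
  rewrite RInt_ocb_lower in Hlow. lra.
Qed.

Lemma MLBstar_ge_of_le_4 (d : nat) : (d <= 4)%nat -> MLBstar d >= 1 / 1131.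
Proof.
  intros Hd. rewrite MLBstar_RInt.
  assert (Hlow : RInt mlb_lower 0 (1 / 2) <= RInt (mlb_integrand d) 0 (1 / 2)).
  { apply RInt_le; [lra | | apply ex_RInt_mlb_integrand |].
    - apply ex_RInt_of_ex_derive; [lra |]. intros x _. apply ex_derive_mlb_lower.
    - intros x Hx. apply mlb_lower_le; [exact Hd | lra]. }
  rewrite RInt_mlb_lower in Hlow. lra.
Qed.

Theorem mainTheorem4 (Thr : R) (hpos : 0 < Thr) (hle : Thr <= 1 / 4678) :
  (forall d : nat, (5 <= d)%nat -> OCBstar d >= MLBstar d) /\
  (forall d : nat, (d <= 4)%nat ->
     (OCBstar d >= 1 / 1131 /\ 1 / 1131 >= Thr) /\
     (MLBstar d >= 1 / 1131 /\ 1 / 1131 >= Thr)).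
Proof.
  split.
  - exact OCBstar_ge_MLBstar.
  - intros d Hd. split; split; try lra.
    + exact (OCBstar_ge_of_le_4 d Hd).
    + exact (MLBstar_ge_of_le_4 d Hd).
Qed.
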